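(* Let $[R_1,\dots,R_L]$ be the rule vector of a one-dimensional linear null hybrid 90/150 cellular automaton and let $P_i(x)=\sum_j c^{(i)}_j x^j$ denote the characteristic polynomial of the sub-automaton $R_1R_2\cdots R_i$. For any evolution of the automaton, write $z_t=x_1^t$ for the sequence in the leftmost cell. Then for every $1\le i\le L$ and every $t$, $$x_i^t=\sum_j c^{(i-1)}_j\, z_{t+j}.$$ Consequently, if the cell-$i$ sequence $\{x_i^t\}$ is in turn placed as the leftmost-cell sequence of the same automaton and this is repeated, then after $n$ such steps the sequence obtained at cell $i$ is $\sum_j d_j z_{t+j}$, where $P_{i-1}(x)^n=\sum_j d_j x^j$ (coefficients in $GF(2)$). *)

From HB Require Import structures.
From mathcomp Require Import all_boot all_order all_algebra.
Set Implicit Arguments. Unset Strict Implicit. Unset Printing Implicit Defensive.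
Import GRing.Theory.
Local Open Scope ring_scope.

(* A rule vector [R_1,...,R_L] is a [seq bool] of length L;
   [true] = rule 150, [false] = rule 90.  Cells are numbered 1..L. *)

Definition rule_coef (R : seq bool) (i : nat) : 'F_2 := (nth false R i.-1)%:R.

Definition cell (L : nat) (s : nat -> 'F_2) (i : nat) : 'F_2 :=
  if (1 <= i <= L)%N then s i else 0.

(* x t i = state x_i^t of cell i at time t *)
Definition is_evolution (R : seq bool) (x : nat -> nat -> 'F_2) : Prop :=
  forall (t i : nat), (1 <= i <= size R)%N ->
    x t.+1 i = cell (size R) (x t) i.-1 + rule_coef R i * x t i
               + cell (size R) (x t) i.+1.

(* transition matrix of the null-boundary sub-automaton R_1 ... R_m
   (0-indexed rows/cols; row j corresponds to cell j+1) *)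
Definition trans_mx (R : seq bool) (m : nat) : 'M['F_2]_m :=
  \matrix_(j, k) (if j == k then rule_coef R j.+1
                  else if (j.+1 == k :> nat) || (k.+1 == j :> nat) then 1 else 0).

Definition charP (R : seq bool) (m : nat) : {poly 'F_2} := char_poly (trans_mx R m).

From HB Require Import structures.
From mathcomp Require Import all_boot all_order all_algebra zify.
Set Implicit Arguments. Unset Strict Implicit. Unset Printing Implicit Defensive.
Import GRing.Theory.
Local Open Scope ring_scope.

(* Let a polynomial p act on sequences as p(E), E the shift.  Solving the update
   rule of cell k for its right neighbour gives, in characteristic 2,
   x_{k+1} = (E + d_k) x_k + x_{k-1}, the same three-term recurrence
   P_k = (X + d_k) P_{k-1} + P_{k-2} that the tridiagonal characteristic polynomials
   satisfy by expansion along the last row; hence x_k = P_{k-1}(E) x_1.  Since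
   P(E) Q(E) = (PQ)(E), feeding cell i back n times applies P_{i-1}(E)^n. *)

Section PolyShift.
Variable K : comNzRingType.
Implicit Types (p q : {poly K}) (f g : nat -> K).

Definition polyshift (p : {poly K}) (f : nat -> K) (t : nat) : K :=
  \sum_(j < size p) p`_j * f (t + j)%N.

Lemma polyshift_widen p f t n : (size p <= n)%N ->
  polyshift p f t = \sum_(j < n) p`_j * f (t + j)%N.
Proof.
move=> le_p_n; rewrite /polyshift (big_ord_widen _ (fun j => p`_j * f (t + j)%N) le_p_n).
rewrite big_mkcond; apply: eq_bigr => j _; case: ltnP => // /(nth_default 0) ->.
by rewrite mul0r.
Qed.

Lemma eq_polyshift p f g t : f =1 g -> polyshift p f t = polyshift p g t.
Proof. by move=> eq_fg; apply: eq_bigr => j _; rewrite eq_fg. Qed.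

Lemma polyshiftD p q f t : polyshift (p + q) f t = polyshift p f t + polyshift q f t.
Proof.
rewrite !(@polyshift_widen _ _ _ (maxn (size p) (size q))) ?leq_maxl ?leq_maxr ?size_polyD //.
by rewrite -big_split; apply: eq_bigr => j _; rewrite coefD mulrDl.
Qed.

Lemma polyshiftC c f t : polyshift c%:P f t = c * f t.
Proof. by rewrite (@polyshift_widen _ _ _ 1) ?size_polyC_leq1 // big_ord1 coefC addn0. Qed.

Lemma polyshiftCM c p f t : polyshift (c%:P * p) f t = c * polyshift p f t.
Proof.
rewrite !(@polyshift_widen _ _ _ (size p)) ?mul_polyC ?size_scale_leq // mulr_sumr.
by apply: eq_bigr => j _; rewrite -mul_polyC coefCM mulrA.
Qed.

Lemma polyshiftXM p f t : polyshift ('X * p) f t = polyshift p f t.+1.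
Proof.
rewrite (@polyshift_widen _ _ _ (size p).+1); last first.
  by rewrite (leq_trans (size_polyMleq _ _)) // size_polyX.
rewrite big_ord_recl coefXM mul0r add0r; apply: eq_bigr => j _.
by rewrite coefXM addnS addSn.
Qed.

Lemma polyshift1 f t : polyshift 1 f t = f t.
Proof. by rewrite -polyC1 polyshiftC mul1r. Qed.

Lemma polyshiftX f t : polyshift 'X f t = f t.+1.
Proof. by rewrite -['X]mulr1 polyshiftXM polyshift1. Qed.

Lemma polyshiftM p q f t : polyshift (p * q) f t = polyshift p (polyshift q f) t.
Proof.
elim/poly_ind: p f t => [|p c IHp] f t; first by rewrite mul0r /polyshift size_poly0 !big_ord0.
rewrite [p * 'X]mulrC mulrDl -mulrA !polyshiftD !polyshiftXM IHp.
by rewrite polyshiftCM polyshiftC.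
Qed.

End PolyShift.

Lemma oppF2 (a : 'F_2) : - a = a.
Proof. exact/oppr_pchar2/pchar_Fp. Qed.

Lemma oppF2poly (p : {poly 'F_2}) : - p = p.
Proof. by apply/oppr_pchar2; rewrite pchar_poly pchar_Fp. Qed.

Lemma cofactorF2 n (A : 'M[{poly 'F_2}]_n) i j : cofactor A i j = \det (row' i (col' j A)).
Proof. by rewrite /cofactor oppF2poly expr1n mul1r. Qed.

Lemma addF2_solve (a b c d : 'F_2) : a = b + c + d -> d = a + b + c.
Proof. by move=> ->; rewrite -[_ + c]addrA addrC -{1}[b + c]oppF2 addKr. Qed.

Definition charP_entry (R : seq bool) (j k : nat) : {poly 'F_2} :=
  if j == k then 'X + (rule_coef R j.+1)%:P
  else if (j.+1 == k) || (k.+1 == j) then 1 else 0.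

Lemma char_poly_mx_trans_mxE R m (j k : 'I_m) :
  char_poly_mx (trans_mx R m) j k = charP_entry R j k.
Proof.
rewrite /charP_entry !mxE -val_eqE /=; case: eqP => [-> | _]; first by rewrite oppF2poly.
by rewrite sub0r; case: ifP; rewrite ?rmorph1 ?oppF2poly ?rmorph0 ?oppr0.
Qed.

Lemma charP_entry_far R j k : (j.+1 < k)%N -> charP_entry R j k = 0 /\ charP_entry R k j = 0.
Proof.
by move=> lt_jk; rewrite /charP_entry !ifF //; apply/negbTE; rewrite ?negb_or; lia.
Qed.

Lemma char_poly_mx_trans_mx_minor R m :
  row' ord_max (col' ord_max (char_poly_mx (trans_mx R m.+1))) = char_poly_mx (trans_mx R m).
Proof.
apply/matrixP => j k; rewrite mxE [in RHS]char_poly_mx_trans_mxE mxE.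
by rewrite char_poly_mx_trans_mxE !lift_max.
Qed.

Lemma det_char_poly_mx_trans_mx_subminor R m :
  \det (row' ord_max (col' (widen_ord (leqnSn m.+1) ord_max) (char_poly_mx (trans_mx R m.+2))))
  = \det (char_poly_mx (trans_mx R m)).
Proof.
rewrite (expand_det_col _ ord_max) big_ord_recr /= big1 ?add0r => [|j _]; last first.
  rewrite mxE [X in X * _]mxE char_poly_mx_trans_mxE lift_max /= /bump leqnn add1n.
  by rewrite (charP_entry_far R (ltn_ord j : j.+1 < m.+1)%N).1 mul0r.
rewrite cofactorF2 mxE [X in X * _]mxE char_poly_mx_trans_mxE lift_max /= /bump leqnn add1n.
rewrite /charP_entry (ltn_eqF (ltnSn m)) eqxx mul1r; congr (\det _).
apply/matrixP => j k; do 4 rewrite [LHS]mxE.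
rewrite !char_poly_mx_trans_mxE !lift_max /= /bump.
have k_lt_m : (m <= k)%N = false by rewrite leqNgt ltn_ord.
by rewrite k_lt_m add0n k_lt_m.
Qed.

Lemma charP_rec R m :
  charP R m.+2 = ('X + (rule_coef R m.+2)%:P) * charP R m.+1 + charP R m.
Proof.
rewrite /charP /char_poly (expand_det_row _ ord_max) !big_ord_recr /=.
rewrite big1 ?add0r => [|j _]; last first.
  by rewrite char_poly_mx_trans_mxE (charP_entry_far R (ltn_ord j : (j.+1 < m.+1)%N)).2 mul0r.
rewrite !cofactorF2 char_poly_mx_trans_mx_minor det_char_poly_mx_trans_mx_subminor.
rewrite !char_poly_mx_trans_mxE /charP_entry /= eqxx (gtn_eqF (ltnSn m)) orbT mul1r.
by rewrite addrC.
Qed.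

Lemma charP0 R : charP R 0 = 1.
Proof. by rewrite /charP /char_poly det_mx00. Qed.

Lemma charP1 R : charP R 1 = 'X + (rule_coef R 1)%:P.
Proof. by rewrite /charP /char_poly det_mx11 char_poly_mx_trans_mxE. Qed.

Lemma cell0 L (s : nat -> 'F_2) : cell L s 0 = 0.
Proof. by []. Qed.

Lemma cell_in L (s : nat -> 'F_2) i : (1 <= i <= L)%N -> cell L s i = s i.
Proof. by rewrite /cell => ->. Qed.

Section Evolution.
Variables (R : seq bool) (x : nat -> nat -> 'F_2).
Hypothesis evx : is_evolution R x.

Lemma evolution_next_cell k t : (k.+2 <= size R)%N ->
  x t k.+2 = x t.+1 k.+1 + cell (size R) (x t) k + rule_coef R k.+1 * x t k.+1.
Proof.
move=> lt_k2; apply: addF2_solve; rewrite evx ?(ltnW lt_k2) //.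
by rewrite [cell _ _ k.+2]cell_in ?lt_k2.
Qed.

Lemma evolution_cell_charP k t : (k < size R)%N ->
  x t k.+1 = polyshift (charP R k) (x^~ 1%N) t.
Proof.
elim/ltn_ind: k t => -[|[|k]] IH t lt_k.
- by rewrite charP0 polyshift1.
- rewrite evolution_next_cell // charP1 polyshiftD polyshiftX polyshiftC.
  by rewrite cell0 addr0.
- have lt_k1 : (k.+1 < size R)%N := ltnW lt_k.
  rewrite evolution_next_cell // cell_in ?(ltnW lt_k1) // charP_rec polyshiftD polyshiftM.
  rewrite polyshiftD polyshiftX polyshiftC -!IH ?(ltnW lt_k1) //.
  by rewrite addrAC.
Qed.
End Evolution.

Lemma evolution_cellE R x i t : is_evolution R x -> (1 <= i <= size R)%N ->
  x t i = polyshift (charP R i.-1) (x^~ 1%N) t.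
Proof. by case: i => // i evx /andP[_ lt_i]; exact: (evolution_cell_charP evx). Qed.

Lemma evolution_feedback_charPX R i n (e : nat -> nat -> nat -> 'F_2) :
  (1 <= i <= size R)%N ->
  (forall k, (1 <= k <= n)%N -> is_evolution R (e k)) ->
  (forall k t, (1 <= k < n)%N -> e k.+1 t 1%N = e k t i) ->
  forall k t, (1 <= k <= n)%N -> e k t i = polyshift (charP R i.-1 ^+ k) (e 1%N ^~ 1%N) t.
Proof.
move=> lt_i eve efb; elim=> // k IHk t /andP[_ le_k1n].
rewrite (evolution_cellE _ (eve _ _)) // ?le_k1n //.
case: k IHk le_k1n => [|k] IHk le_k2n; first by rewrite expr1.
rewrite exprS polyshiftM; apply: eq_polyshift => s.
by rewrite efb ?IHk ?(ltnW le_k2n).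
Qed.

Theorem mainTheorem6 (R : seq bool) (x : nat -> nat -> 'F_2) :
  is_evolution R x ->
  (forall (i t : nat), (1 <= i <= size R)%N ->
     x t i = \sum_(j < size (charP R i.-1)) (charP R i.-1)`_j * x (t + j)%N 1%N)
  /\
  (forall (i n : nat) (e : nat -> nat -> nat -> 'F_2),
     (1 <= i <= size R)%N -> (1 <= n)%N ->
     (forall k, (1 <= k <= n)%N -> is_evolution R (e k)) ->
     (forall t, e 1%N t 1%N = x t 1%N) ->
     (forall k t, (1 <= k < n)%N -> e k.+1 t 1%N = e k t i) ->
     forall t, e n t i =
       \sum_(j < size (charP R i.-1 ^+ n)) (charP R i.-1 ^+ n)`_j * x (t + j)%N 1%N).
Proof.
move=> evx; split=> [i t lt_i | i n e lt_i lt_n eve e1 efb t].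
  exact: evolution_cellE.
rewrite (evolution_feedback_charPX lt_i eve efb) ?lt_n ?leqnn //.
exact: eq_polyshift _ t e1.
Qed.
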